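(* Let $G(Y)$ be a complex of groups over a polygonal complex $Y$, let $\sigma$ be a vertex of $Y$ whose link in $Y$ contains no loops, and let $V = G_\sigma$, $a_j$, $c_k$, $E_j$, $F_k$, $b_{kj}$ and the graph $L$ be as described in the context. Suppose that $a_j$ and $a_{j'}$ belong to at least one common face of $Y$. Then in $L$: (1) For all $g, g' \in V$ there is at least one edge connecting $g\psi_{a_j}(E_j)$ to $g'\psi_{a_{j'}}(E_{j'})$ if and only if every $h \in V$ can be written as $h = \psi_{a_j}(e_j)\, x\, \psi_{a_{j'}}(e_{j'})$ for some $e_j \in E_j$, $e_{j'} \in E_{j'}$ and $x \in X_{j,j'} := \{ g_{a_j,b_{kj}} g_{a_{j'},b_{kj'}}^{-1} \mid a_j, a_{j'}, c_k \text{ belong to the same face of } Y\}$. (2) For all $g, g' \in V$ there is at most one edge connecting $g\psi_{a_j}(E_j)$ to $g'\psi_{a_{j'}}(E_{j'})$ if and only if, for every $k$ such that $a_j$, $a_{j'}$ and $c_k$ belong to the same face of $Y$, $$ g_{a_j,b_{kj}}^{-1}\psi_{a_j}(E_j) g_{a_j,b_{kj}} \cap g_{a_{j'},b_{kj'}}^{-1}\psi_{a_{j'}}(E_{j'}) g_{a_{j'},b_{kj'}} = \psi_{c_k}(F_k).$$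
   Context: Let $Y$ be a polygonal complex and $Y'$ its first barycentric subdivision. The vertices of $Y'$ are the barycenters of cells of $Y$. Each edge $a$ of $Y'$ joins the barycenters of cells $\tau \subsetneq \tau'$ and is oriented from $i(a) = \tau'$ to $t(a) = \tau$. Edges $a, b$ of $Y'$ are composable if $i(a) = t(b)$; then $ab$ denotes the edge of $Y'$ with $i(ab) = i(b)$ and $t(ab) = t(a)$. A complex of groups $G(Y) = (G_\tau, \psi_a, g_{a,b})$ over $Y$ consists of: - a group $G_\tau$ for each vertex $\tau$ of $Y'$; - a monomorphism $\psi_a : G_{i(a)} \to G_{t(a)}$ for each edge $a$ of $Y'$; - for each composable pair $(a,b)$, an element $g_{a,b} \in G_{t(a)}$ with $\mathrm{Ad}(g_{a,b}) \circ \psi_{ab} = \psi_a \circ \psi_b$, where $\mathrm{Ad}$ denotes conjugation. Fix a vertex $\sigma$ of $Y$ whose link in $Y$ has no loops, i.e. no face adjacent to $\sigma$ is glued to itself along an edge containing $\sigma$. Put $V = G_\sigma$. Let $\{a_j\}$ be the edges of $Y'$ with $t(a_j) = \sigma$ and $i(a_j)$ the midpoint of an edge of $Y$, and put $E_j = G_{i(a_j)}$. Let $\{c_k\}$ be the edges of $Y'$ with $t(c_k) = \sigma$ and $i(c_k)$ the barycenter of a face of $Y$, and put $F_k = G_{i(c_k)}$. Whenever $a_j$ and $c_k$ lie in the same face of $Y$, let $b_{kj}$ be the unique edge of $Y'$ with $i(b_{kj}) = i(c_k)$ and $t(b_{kj}) = i(a_j)$, so that $a_j b_{kj} = c_k$.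 The link $L$ of the local development of $\sigma$ is the graph whose vertex set is the disjoint union of the coset sets $V/\psi_{a_j}(E_j)$ and whose edge set is the disjoint union of the coset sets $V/\psi_{c_k}(F_k)$. The edges between $g\psi_{a_j}(E_j)$ and $g'\psi_{a_{j'}}(E_{j'})$ are the cosets of $\psi_{c_k}(F_k)$ contained in $(g\,\psi_{a_j}(E_j)\,g_{a_j,b_{kj}}) \cap (g'\,\psi_{a_{j'}}(E_{j'})\,g_{a_{j'},b_{kj'}})$, for each $k$ such that $a_j$, $a_{j'}$ and $c_k$ belong to the same face of $Y$.
   Formalization: In (2), at most one edge means, for each k separately, at most one coset of $\psi_{c_k}(F_k)$ connecting $g\psi_{a_j}(E_j)$ to $g'\psi_{a_{j'}}(E_{j'})$; also $a_j \neq a_{j'}$ is assumed. Apart from conventions, each condition added here is assumed in the paper as well or is needed for the statement above to hold. *)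

From HB Require Import structures.
From mathcomp Require Import all_boot.
From mathcomp Require Import monoid.


Local Open Scope group_scope.

Definition monomorphism {G H : groupType} (f : G -> H) : Prop :=
  (forall x y, f (x * y) = f x * f y) /\ injective f.

(* The part of a complex of groups G(Y) over a polygonal complex Y that lives
   at (the star of) a vertex sigma of Y, in the notation of the paper:
   - [cV]            V = G_sigma;
   - [cJ]            index set of the edges a_j of Y' with t(a_j) = sigma and
                     i(a_j) the midpoint of an edge of Y; [cE j] = E_j;
   - [cK]            index set of the edges c_k of Y' with t(c_k) = sigma and
                     i(c_k) the barycenter of a face of Y;  [cF k] = F_k;
   - [psiA j] = psi_{a_j} : E_j -> V,  [psiC k] = psi_{c_k} : F_k -> V;
   - [same_face k j] : a_j and c_k lie in the same face of Y, i.e. the edge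
                     b_{kj} of Y' (with a_j b_{kj} = c_k) exists;
   - [psiB k j] = psi_{b_{kj}} : F_k -> E_j   (meaningful when same_face k j);
   - [gab k j]  = g_{a_j, b_{kj}} in V       (meaningful when same_face k j);
   - [compat] :  Ad(g_{a_j,b_{kj}}) o psi_{c_k} = psi_{a_j} o psi_{b_{kj}};
   - [no_loops] : the link of sigma in Y has no loops: each corner c_k of a
     face at sigma is adjacent (inside its face) to exactly two edges
     a_j, a_j' of Y at sigma, and these are distinct. *)
Record vertex_data := VertexData {
  cJ : Type;
  cK : Type;
  cV : groupType;
  cE : cJ -> groupType;
  cF : cK -> groupType;
  psiA : forall j, cE j -> cV;
  psiC : forall k, cF k -> cV;
  same_face : cK -> cJ -> Prop;
  psiB : forall k j, cF k -> cE j;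
  gab : cK -> cJ -> cV;
  psiA_mono : forall j, monomorphism (psiA j);
  psiC_mono : forall k, monomorphism (psiC k);
  psiB_mono : forall k j, same_face k j -> monomorphism (psiB k j);
  compat : forall k j, same_face k j -> forall f : cF k,
      gab k j * psiC k f * (gab k j)^-1 = psiA j (psiB k j f);
  no_loops : forall k, exists j1 j2, j1 <> j2 /\ same_face k j1 /\
      same_face k j2 /\ forall j, same_face k j -> j = j1 \/ j = j2
}.

Section Link.
Variable D : vertex_data.

Definition imA (j : cJ D) : cV D -> Prop := fun v => exists e, v = psiA D j e.
Definition imC (k : cK D) : cV D -> Prop := fun v => exists f, v = psiC D k f.

Definition translate (g : cV D) (S : cV D -> Prop) (x : cV D) : cV D -> Prop :=
  fun v => exists s, S s /\ v = g * s * x.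

Definition conj_set (S : cV D -> Prop) (x : cV D) : cV D -> Prop :=
  translate x^-1 S x.

(* The link L of the local development at sigma.
   Vertices: pairs (j, g) standing for the coset g psi_{a_j}(E_j).
   Edges:    pairs (k, h) standing for the coset h psi_{c_k}(F_k).
   [link_edge k h j g j' g'] : the edge h psi_{c_k}(F_k) connects the vertex
   g psi_{a_j}(E_j) to g' psi_{a_j'}(E_j'), namely a_j, a_j', c_k belong to
   the same face and
     h psi_{c_k}(F_k) is contained in
     (g psi_{a_j}(E_j) g_{a_j,b_kj}) cap (g' psi_{a_j'}(E_j') g_{a_j',b_kj'}). *)
Definition link_edge (k : cK D) (h : cV D) (j : cJ D) (g : cV D)
    (j' : cJ D) (g' : cV D) : Prop :=
  same_face D k j /\ same_face D k j' /\
  forall c, imC k c ->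
    translate g (imA j) (gab D k j) (h * c) /\
    translate g' (imA j') (gab D k j') (h * c).

(* Two representatives h1, h2 give the same edge (k, h psi_{c_k}(F_k)) iff
   h1 psi_{c_k}(F_k) = h2 psi_{c_k}(F_k). *)
Definition same_edge (k : cK D) (h1 h2 : cV D) : Prop :=
  imC k (h1^-1 * h2).

Definition Xset (j j' : cJ D) : cV D -> Prop :=
  fun x => exists k, same_face D k j /\ same_face D k j' /\
                     x = gab D k j * (gab D k j')^-1.

End Link.

(** By the compatibility [compat], right multiplication by
    [psi_{c_k}(F_k)] preserves the double-sided translate
    [g psi_{a_j}(E_j) g_{a_j,b_kj}], so an edge [h psi_{c_k}(F_k)] joins
    [g psi_{a_j}(E_j)] to [g' psi_{a_j'}(E_j')] exactly when its representative
    [h] lies in both translates.  An [h] in both exists iff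
    [g^-1 g' = psi_{a_j}(e) g_{a_j,b_kj} g_{a_j',b_kj'}^-1 psi_{a_j'}(e')], which
    gives (1); and the representatives of such edges form one left coset of the
    intersection of the conjugates [g^-1 psi(E) g], which always contains
    [psi_{c_k}(F_k)], which gives (2). *)
From mathcomp Require Import all_boot.
From mathcomp Require Import monoid.
From Stdlib Require Import Setoid.
Local Open Scope group_scope.

Section Monomorphism.
Context {G H : groupType} {f : G -> H} (f_mono : monomorphism f).

Lemma monomorphismM x y : f (x * y) = f x * f y.
Proof. exact: f_mono.1. Qed.

Lemma monomorphism1 : f 1 = 1.
Proof. by apply: (@mulgI _ (f 1)); rewrite mulg1 -monomorphismM mulg1. Qed.

Lemma monomorphismV x : f x^-1 = (f x)^-1.
Proof. by apply/esym/mulg1_eq; rewrite -monomorphismM mulgV monomorphism1. Qed.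

End Monomorphism.

Section LinkEdges.
Context {D : vertex_data}.
Implicit Types (j : cJ D) (k : cK D) (g h v x : cV D).

Lemma translate_imAP g j x v :
  translate D g (imA D j) x v <-> exists a, v = g * psiA D j a * x.
Proof.
split=> [[_ [[a ->] ->]] | [a ->]]; first by exists a.
by exists (psiA D j a); split=> //; exists a.
Qed.

Lemma translate_imA_shift {g j x h0} h :
  translate D g (imA D j) x h0 ->
  translate D g (imA D j) x h <-> conj_set D (imA D j) x (h0^-1 * h).
Proof.
rewrite /conj_set !translate_imAP => -[a ->].
have AM := monomorphismM (psiA_mono D j); have AV := monomorphismV (psiA_mono D j).
split=> [[b ->] | [c Ec]].
  by exists (a^-1 * b); rewrite AM AV !invgM !mulgA mulgVK.
exists (a * c); rewrite AM -[h](mulVKg (g * psiA D j a * x)) Ec.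
by rewrite !mulgA mulgK.
Qed.

Lemma imC_sub_conj_set k j : same_face D k j ->
  forall v, imC D k v -> conj_set D (imA D j) (gab D k j) v.
Proof.
move=> sf _ [f ->]; apply/translate_imAP; exists (psiB D k j f).
by rewrite -(compat _ _ _ sf) !mulgA mulVg mul1g mulgVK.
Qed.

Lemma link_edgeP k h j g j' g' :
  link_edge D k h j g j' g' <->
  [/\ same_face D k j, same_face D k j',
      translate D g (imA D j) (gab D k j) h &
      translate D g' (imA D j') (gab D k j') h].
Proof.
have C1 : imC D k 1 by exists 1; rewrite (monomorphism1 (psiC_mono D k)).
split=> [[sf [sf' Hc]] | [sf sf' Th Th']].
  by have [] := Hc 1 C1; rewrite mulg1.
split=> //; split=> // c Cc.
rewrite (translate_imA_shift _ Th) (translate_imA_shift _ Th') mulKg.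
by split; apply: imC_sub_conj_set.
Qed.

Lemma link_edge_mulr {k h j g j' g'} v :
  link_edge D k h j g j' g' ->
  link_edge D k (h * v) j g j' g' <->
  conj_set D (imA D j) (gab D k j) v /\ conj_set D (imA D j') (gab D k j') v.
Proof.
move=> /link_edgeP [sf sf' Th Th'].
have shift := translate_imA_shift (h * v) Th.
have shift' := translate_imA_shift (h * v) Th'.
rewrite mulKg in shift shift'.
split=> [/link_edgeP [_ _ /shift Iv /shift' Iv'] // | [Iv Iv']].
by apply/link_edgeP; split=> //; [apply/shift | apply/shift'].
Qed.

Lemma link_edge_base {k j j'} : same_face D k j -> same_face D k j' ->
  link_edge D k (gab D k j) j 1 j' (gab D k j * (gab D k j')^-1).
Proof.
move=> sf sf'; apply/link_edgeP; split=> //; apply/translate_imAP; exists 1.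
  by rewrite (monomorphism1 (psiA_mono D j)) !mul1g.
by rewrite (monomorphism1 (psiA_mono D j')) mulg1 mulgVK.
Qed.

Lemma link_edge_existsP k j g j' g' :
  (exists h, link_edge D k h j g j' g') <->
  [/\ same_face D k j, same_face D k j' &
      exists a b, g^-1 * g' = psiA D j a * (gab D k j * (gab D k j')^-1) * psiA D j' b].
Proof.
have AV := monomorphismV (psiA_mono D j').
split=> [[h /link_edgeP [sf sf' /translate_imAP [a Ea] /translate_imAP [b Eb]]] |
         [sf sf' [a [b E]]]].
  split=> //; exists a, b^-1.
  have -> : g' = h * (gab D k j')^-1 * (psiA D j' b)^-1 by rewrite Eb !mulgK.
  by rewrite Ea AV !mulgA mulVg mul1g.
exists (g * psiA D j a * gab D k j); apply/link_edgeP; split=> //;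
  apply/translate_imAP; first by exists a.
exists b^-1; rewrite AV -[g'](mulVKg g) E.
by rewrite !mulgA mulgK mulgVK.
Qed.

End LinkEdges.

Theorem proposition3p2 (D : vertex_data) (j j' : cJ D) :
  j <> j' ->
  (exists k, same_face D k j /\ same_face D k j') ->
  (* (1) *)
  ((forall g g' : cV D, exists k h, link_edge D k h j g j' g') <->
   (forall h : cV D, exists (ej : cE D j) (ej' : cE D j') x,
      Xset D j j' x /\ h = psiA D j ej * x * psiA D j' ej'))
  /\
  (* (2) *)
  ((forall (g g' : cV D) (k : cK D) (h1 h2 : cV D),
       link_edge D k h1 j g j' g' -> link_edge D k h2 j g j' g' ->
       same_edge D k h1 h2) <->
   (forall k, same_face D k j -> same_face D k j' ->
      forall v, (conj_set D (imA D j) (gab D k j) v /\ conj_set D (imA D j') (gab D k j') v)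
                <-> imC D k v)).
Proof.
move=> _ _; split; split.
- move=> connected h; have [k /link_edge_existsP [sf sf' [a [b]]]] := connected 1 h.
  rewrite invg1 mul1g => ->.
  by exists a, b, (gab D k j * (gab D k j')^-1); split=> //; exists k.
- move=> decomp g g'; have [a [b [_ [[k [sf [sf' ->]]] E]]]] := decomp (g^-1 * g').
  by exists k; apply/link_edge_existsP; split=> //; exists a, b.
- move=> simple k sf sf' v; split=> [Iv | Cv]; last first.
    by split; apply: imC_sub_conj_set.
  have base := link_edge_base sf sf'.
  rewrite -[v](mulKg (gab D k j)); apply: (simple _ _ _ _ _ base).
  exact/(link_edge_mulr v base).
- move=> inter g g' k h1 h2 E1 E2; have /link_edgeP [sf sf' _ _] := E1.
  by apply/(inter k sf sf')/(link_edge_mulr (h1^-1 * h2) E1); rewrite mulVKg.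
Qed.
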